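(* For every integer $n\ge 1$, the restriction to $\mathfrak{sl}(n+1)$ of the functional $$F_n=\sum_{i=1}^{n}\sum_{j=1}^{n+1-i}e_{i,j}^*$$ (a sum of coordinate functionals on $(n+1)\times(n+1)$ matrices, all strictly above the antidiagonal) is regular on $A_n=\mathfrak{sl}(n+1)$, i.e. the kernel of its Kirillov form on $\mathfrak{sl}(n+1)$ has dimension $n$.
   Context: Over $\mathbb{C}$. $e_{i,j}^*(X)=X_{i,j}$. For a Lie algebra $\mathfrak{g}$ and $f\in\mathfrak{g}^*$, $B_f(x,y)=f([x,y])$, $\ker(B_f)=\{x\in\mathfrak{g}: f([x,y])=0\ \forall y\in\mathfrak{g}\}$, and $f$ is regular if $\dim\ker(B_f)=\operatorname{ind}\mathfrak{g}:=\min_{g\in\mathfrak{g}^*}\dim\ker(B_g)$. It is known that $\operatorname{ind}\mathfrak{sl}(n+1)=n$. *)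

From HB Require Import structures.
From mathcomp Require Import all_boot all_order all_algebra.
Set Implicit Arguments. Unset Strict Implicit. Unset Printing Implicit Defensive.
Import GRing.Theory Num.Theory.
Local Open Scope ring_scope.

Definition in_sl (C : fieldType) (m : nat) (X : 'M[C]_m) : Prop := \tr X = 0.

Definition lie_br (C : fieldType) (m : nat) (X Y : 'M[C]_m) : 'M[C]_m :=
  X *m Y - Y *m X.

Definition kirillov_ker_sl (C : fieldType) (m : nat) (f : 'M[C]_m -> C)
    (X : 'M[C]_m) : Prop :=
  in_sl X /\ forall Y : 'M[C]_m, in_sl Y -> f (lie_br X Y) = 0.

(* F_n = sum_{i=1}^{n} sum_{j=1}^{n+1-i} e_{i,j}^*  on (n+1)x(n+1) matrices.
   With 0-based indices i', j' (i = i'+1, j = j'+1) the condition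
   1 <= i <= n, 1 <= j <= n+1-i  becomes  i' + j' < n. *)
Definition F_fun (C : fieldType) (n : nat) (A : 'M[C]_n.+1) : C :=
  \sum_(i < n.+1) \sum_(j < n.+1 | (i + j < n)%N) A i j.

(* Let Fmat be the (n+1) x (n+1) matrix with ones exactly where i + j < n,
   so that F_n(A) = tr(A Fmat) and F_n([X,Y]) = tr(Y [Fmat,X]).  Since the
   trace form pairs sl(m) nondegenerately with traceless matrices in
   characteristic 0, the Kirillov kernel of F_n is the traceless part of the
   centralizer of Fmat (section TraceForm, for any field and size).

   Fmat is the block sum of an invertible n x n block and 0; the inverse
   block padded by 0 is the sparse matrix Tmat (ones on i + j = n - 1, minus
   ones on i + j = n), and anything commuting with Fmat commutes with Tmat and
   has vanishing last row and column off the corner.  The Krylov rows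
   u_j = e_0 Tmat^j (j < n) together with e_n form an invertible matrix Kmat:
   u_j is supported on a window of indices and has a +-1 entry at its pivot,
   so Kmat is triangular after reordering its columns.  Consequently an
   element of the centralizer is determined, up to a multiple of the corner
   unit, by its first row, and the traceless centralizer has the basis
   Tmat^l - tr(Tmat^l) Corner, l < n, whence its dimension is n. *)

From HB Require Import structures.
From mathcomp Require Import all_boot all_order all_algebra perm zify.
Import GRing.Theory Num.Theory.
Local Open Scope ring_scope.

Section TraceForm.
Variables (C : fieldType) (m : nat).
Implicit Types (A D M X Y : 'M[C]_m).

Lemma mxtraceB A B : \tr (A - B) = \tr A - \tr B.
Proof. exact: raddfB. Qed.

Lemma mxtrace_sum I (r : seq I) (P : pred I) (F : I -> 'M[C]_m) :
  \tr (\sum_(i <- r | P i) F i) = \sum_(i <- r | P i) \tr (F i).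
Proof. exact: raddf_sum. Qed.

Lemma mxtrace_delta_mul (i j : 'I_m) A : \tr (delta_mx i j *m A) = A j i.
Proof.
rewrite /mxtrace (bigD1 i) //= big1 ?addr0.
  rewrite mxE (bigD1 j) //= big1 ?addr0; first by rewrite mxE !eqxx mul1r.
  by move=> l /negbTE ne_lj; rewrite mxE ne_lj andbF mul0r.
by move=> k /negbTE ne_ki; rewrite mxE big1 // => l _; rewrite mxE ne_ki mul0r.
Qed.

Lemma mxtrace_delta (i j : 'I_m) : \tr (delta_mx i j : 'M[C]_m) = (i == j)%:R.
Proof. by rewrite -[delta_mx i j]mulmx1 mxtrace_delta_mul mxE eq_sym. Qed.

(* Matrix units show D is scalar, and a traceless scalar is zero. *)
Lemma sl_orthogonal_eq0 D : m%:R != 0 :> C -> \tr D = 0 ->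
  (forall Y, in_sl Y -> \tr (Y *m D) = 0) -> D = 0.
Proof.
move=> m_neq0 trD orthD.
have offdiag i j : i != j -> D i j = 0.
  move=> ne_ij; rewrite -mxtrace_delta_mul orthD // /in_sl mxtrace_delta eq_sym.
  by rewrite (negbTE ne_ij).
have diag i k : D i i = D k k.
  apply/eqP; rewrite -subr_eq0 -(mxtrace_delta_mul i i) -(mxtrace_delta_mul k k).
  by rewrite -mxtraceB -mulmxBl orthD // /in_sl mxtraceB !mxtrace_delta !eqxx subrr.
apply/matrixP => i j; rewrite mxE; case: (eqVneq i j) => [<- | /offdiag //].
move: trD; rewrite /mxtrace (eq_bigr (fun=> D i i)) => [|k _]; last exact: diag.
rewrite sumr_const card_ord -mulr_natl => /eqP.
by rewrite mulf_eq0 (negbTE m_neq0) => /eqP.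
Qed.

(* The Kirillov kernel on sl(m) of the trace form against M is the traceless
   part of the centralizer of M, since f([X,Y]) = tr(Y (M X - X M)). *)
Lemma kirillov_ker_trace_form M (f : 'M[C]_m -> C) :
  m%:R != 0 :> C -> (forall A, f A = \tr (A *m M)) ->
  forall X, kirillov_ker_sl f X <-> in_sl X /\ X *m M = M *m X.
Proof.
move=> m_neq0 fE X.
have f_bracket Y : f (lie_br X Y) = \tr (Y *m (M *m X - X *m M)).
  rewrite fE /lie_br mulmxBl mxtraceB mulmxBr mxtraceB -mulmxA mxtrace_mulC.
  by rewrite -mulmxA -[Y *m X *m M]mulmxA.
split=> [[slX kerX] | [slX commX]]; last first.
  by split=> // Y _; rewrite f_bracket commX subrr mulmx0 mxtrace0.
split=> //; apply/eqP; rewrite eq_sym -subr_eq0; apply/eqP.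
apply: sl_orthogonal_eq0 => // [|Y slY]; last by rewrite -f_bracket kerX.
by rewrite mxtraceB mxtrace_mulC subrr.
Qed.

End TraceForm.

Lemma mem_span_tupleP (K : fieldType) (vT : vectType K) (k : nat) (s : k.-tuple vT) v :
  v \in <<s>>%VS <-> exists c : 'I_k -> K, v = \sum_i c i *: s`_i.
Proof.
split=> [/coord_span -> | [c ->]]; first by eexists.
by apply: memv_suml => i _; apply/memvZ/memv_span/mem_nth; rewrite size_tuple.
Qed.

Section Matrices.
Variables (C : fieldType) (n : nat).
Local Notation mx := 'M[C]_n.+1.

Lemma ord_maxP (i : 'I_n.+1) : (n <= i)%N -> i = ord_max.
Proof. by move=> le_ni; apply/val_inj => /=; have := ltn_ord i; lia. Qed.

Lemma sum_select (P : pred 'I_n.+1) (f : 'I_n.+1 -> C) k : (k < n.+1)%N ->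
  (forall c : 'I_n.+1, P c = (c == k :> nat)) -> \sum_c f c * (P c)%:R = f (inord k).
Proof.
move=> lt_kn Pk; rewrite (bigD1 (inord k)) //= Pk inordK // eqxx mulr1 big1 ?addr0 //.
move=> c ne_ck; rewrite Pk; case: eqP => [e | _]; last by rewrite mulr0.
by move: ne_ck; rewrite -e inord_val eqxx.
Qed.

Lemma sum_select0 (P : pred 'I_n.+1) (f : 'I_n.+1 -> C) :
  (forall c : 'I_n.+1, P c = false) -> \sum_c f c * (P c)%:R = 0.
Proof. by move=> P0; rewrite big1 // => c _; rewrite P0 mulr0. Qed.

Definition Fmat : mx := \matrix_(i, j) (i + j < n)%N%:R.

Lemma F_fun_trace (A : mx) : F_fun A = \tr (A *m Fmat).
Proof.
rewrite /F_fun /mxtrace; apply: eq_bigr => i _; rewrite mxE big_mkcond /=.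
by apply: eq_bigr => j _; rewrite mxE addnC; case: ifP; rewrite ?mulr1 ?mulr0.
Qed.

(* The inverse of the upper-left n x n block of Fmat is Anti - Sub: ones on
   the antidiagonal i + j = n - 1, minus ones on i + j = n inside the block. *)
Definition Anti : mx := \matrix_(i, j) ((i + j).+1 == n)%:R.
Definition Sub : mx := \matrix_(i, j) [&& (i < n)%N, (j < n)%N & (i + j == n)%N]%:R.
Definition Tmat : mx := Anti - Sub.

Definition Emat : mx := diag_mx (\row_i (i < n)%N%:R).
Definition Corner : mx := delta_mx ord_max ord_max.

(* Fmat *m Anti and Fmat *m Sub are the indicators of a <= b and a < b
   (for b < n); their difference is the identity on the first n indices. *)
Lemma Fmat_Anti (a b : 'I_n.+1) : (Fmat *m Anti) a b = ((b < n) && (a <= b))%N%:R.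
Proof.
rewrite mxE; under eq_bigr => c _ do rewrite !mxE.
have lt_an := ltn_ord a; have lt_bn := ltn_ord b.
case: (ltnP b n) => [lt_b | le_b]; last first.
  by rewrite sum_select0 // => c; apply/negbTE; lia.
rewrite (@sum_select _ _ (n.-1 - b)); first last.
- by move=> c; apply/eqP/eqP; lia.
- lia.
by rewrite inordK; [congr (_%:R); lia | lia].
Qed.

Lemma Fmat_Sub (a b : 'I_n.+1) : (Fmat *m Sub) a b = ((b < n) && (a < b))%N%:R.
Proof.
rewrite mxE; under eq_bigr => c _ do rewrite !mxE.
have lt_an := ltn_ord a; have lt_bn := ltn_ord b.
case: (boolP ((0 < b) && (b < n))%N) => [/andP [gt_b0 lt_b] | out_b]; last first.
  rewrite sum_select0 => [|c]; last by apply/negbTE/and3P; case; lia.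
  by have -> : ((b < n) && (a < b))%N = false by lia.
rewrite (@sum_select _ _ (n - b)); first last.
- by move=> c; apply/and3P/eqP; [case=> *; lia | move=> e; split; lia].
- lia.
by rewrite inordK; [congr (_%:R); lia | lia].
Qed.

Lemma Fmat_Tmat : Fmat *m Tmat = Emat.
Proof.
apply/matrixP => a b; rewrite mulmxBr mxE Fmat_Anti [X in _ + X]mxE Fmat_Sub !mxE -val_eqE /=.
case: (ltngtP a b) => [lt_ab | lt_ba | eq_ab]; rewrite ?andbF ?andbT ?subrr //.
by rewrite subr0 mulr1n eq_ab.
Qed.

Lemma Fmat_tr : Fmat^T = Fmat.
Proof. by apply/matrixP => i j; rewrite !mxE addnC. Qed.

Lemma Tmat_tr : Tmat^T = Tmat.
Proof. by apply/matrixP => i j; rewrite !mxE addnC andbCA. Qed.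

Lemma Tmat_Fmat : Tmat *m Fmat = Emat.
Proof. by rewrite -Fmat_tr -Tmat_tr -trmx_mul Fmat_Tmat tr_diag_mx. Qed.

Lemma Fmat_Tmat_comm : Fmat *m Tmat = Tmat *m Fmat.
Proof. by rewrite Fmat_Tmat Tmat_Fmat. Qed.

Lemma Tmat_eq0 (c i : 'I_n.+1) : ((c + i).+1 != n)%N ->
  ~~ [&& (c < n)%N, (i < n)%N & (c + i == n)%N] -> Tmat c i = 0.
Proof. by move=> /negbTE anti0 /negbTE sub0; rewrite !mxE anti0 sub0 subrr. Qed.

Lemma Tmat_lastcol (i : 'I_n.+1) : Tmat i ord_max = 0.
Proof. by apply: Tmat_eq0 => /=; lia. Qed.

Lemma Tmat_Emat : Tmat *m Emat = Tmat.
Proof.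
apply/matrixP => i j; rewrite mul_mx_diag mxE [X in _ * X]mxE.
case: (ltnP j n) => [_ | /ord_maxP ->]; first by rewrite mulr1.
by rewrite Tmat_lastcol mul0r.
Qed.

Lemma Emat_Tmat : Emat *m Tmat = Tmat.
Proof. by rewrite -Tmat_tr /Emat -tr_diag_mx -trmx_mul Tmat_Emat. Qed.

Lemma Fmat_mul_lastrow (A : mx) (j : 'I_n.+1) : (Fmat *m A) ord_max j = 0.
Proof. by rewrite mxE big1 // => l _; rewrite mxE ltnNge leq_addr mul0r. Qed.

Lemma mul_Fmat_lastcol (A : mx) (i : 'I_n.+1) : (A *m Fmat) i ord_max = 0.
Proof. by rewrite mxE big1 // => l _; rewrite mxE ltnNge leq_addl mulr0. Qed.

Lemma Fmat_Corner : Fmat *m Corner = 0.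
Proof.
apply/matrixP => i j; rewrite mxE [RHS]mxE big1 // => l _; rewrite !mxE.
by case: (eqVneq l ord_max) => [-> | _]; rewrite ?mulr0 // ltnNge leq_addl mul0r.
Qed.

Lemma Corner_Fmat : Corner *m Fmat = 0.
Proof. by apply: trmx_inj; rewrite trmx_mul Fmat_tr trmx_delta Fmat_Corner trmx0. Qed.

(* A matrix commuting with Fmat is block diagonal for the splitting n + 1 and
   commutes with Tmat: its first n x n block commutes with that of Fmat, hence
   with the inverse block. *)
Section FmatCentralizer.
Variable X : mx.
Hypothesis commX : X *m Fmat = Fmat *m X.

Lemma centralizer_lastrow (j : 'I_n.+1) : (j < n)%N -> X ord_max j = 0.
Proof.
move=> lt_jn; have : (X *m Emat) ord_max j = X ord_max j.
  by rewrite mul_mx_diag !mxE lt_jn mulr1.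
by rewrite -Fmat_Tmat mulmxA commX -mulmxA Fmat_mul_lastrow => <-.
Qed.

Lemma centralizer_lastcol (i : 'I_n.+1) : (i < n)%N -> X i ord_max = 0.
Proof.
move=> lt_in; have : (Emat *m X) i ord_max = X i ord_max.
  by rewrite mul_diag_mx !mxE lt_in mul1r.
by rewrite -Tmat_Fmat -mulmxA -commX mulmxA mul_Fmat_lastcol => <-.
Qed.

Lemma centralizer_Emat : X *m Emat = Emat *m X.
Proof.
apply/matrixP => i j; rewrite mul_mx_diag mul_diag_mx !mxE.
case: (ltnP i n) => [lt_in | /ord_maxP ->]; case: (ltnP j n) => [lt_jn | /ord_maxP ->];
  rewrite ?mulr1 ?mul1r ?mulr0 ?mul0r //.
- by rewrite centralizer_lastcol.
- by rewrite centralizer_lastrow.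
Qed.

(* T X = T E X = T X E = T X F T = T F X T = E X T = X E T = X T. *)
Lemma centralizer_Tmat : X *m Tmat = Tmat *m X.
Proof.
rewrite -{2}Tmat_Emat -mulmxA -centralizer_Emat -Fmat_Tmat.
rewrite [X *m (Fmat *m Tmat)]mulmxA commX -mulmxA mulmxA Tmat_Fmat.
by rewrite mulmxA -centralizer_Emat -mulmxA Emat_Tmat.
Qed.

End FmatCentralizer.

Lemma Tmat_anti (c i : 'I_n.+1) : ((c + i).+1 == n)%N -> Tmat c i = 1.
Proof.
move=> anti; rewrite !mxE anti (_ : [&& _, _ & _] = false) ?subr0 //.
by apply/negbTE; move: anti; lia.
Qed.

Lemma Tmat_sub (c i : 'I_n.+1) : (c < n)%N -> (i < n)%N -> (c + i == n)%N ->
  Tmat c i = -1.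
Proof.
move=> lt_cn lt_in sub; rewrite !mxE lt_cn lt_in sub (_ : (_ == n)%N = false) ?sub0r //.
by apply/negbTE; move: sub; lia.
Qed.

(* The Krylov rows u_j = e_0 T^j; together with e_n they will form a basis. *)
Definition krylov (j : nat) : 'rV[C]_n.+1 := row 0 (Tmat ^+ j).

Lemma krylovS j (i : 'I_n.+1) : krylov j.+1 0 i = \sum_c krylov j 0 c * Tmat c i.
Proof. by rewrite /krylov exprSr -mulmxE row_mul mxE. Qed.

Lemma krylov0 (i : 'I_n.+1) : krylov 0 0 i = (i == 0 :> nat)%:R.
Proof. by rewrite /krylov expr0 !mxE eq_sym. Qed.

(* Where u_j can be nonzero: an initial segment of the indices for even j,
   a final segment of the first n indices for odd j. *)
Definition window (j c : nat) : bool :=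
  if odd j then (n <= c + j./2 + 1)%N else (c <= j./2)%N.

Lemma krylov_window j (c : 'I_n.+1) : ~~ window j c -> krylov j 0 c = 0.
Proof.
elim: j c => [|j IHj] c out_c.
  by rewrite krylov0 (_ : (c == 0 :> nat) = false) //; move: out_c; rewrite /window /=; lia.
rewrite krylovS big1 // => l _; case: (boolP (window j l)) => in_l; last first.
  by rewrite IHj ?mul0r.
rewrite Tmat_eq0 ?mulr0 //; move: in_l out_c; rewrite /window /=;
  case: (boolP (odd j)) => /= odd_j; lia.
Qed.

(* The pivot of u_j: its extreme possible position, carrying the entry +-1. *)
Definition pivot (j : nat) : nat := if odd j then (n.-1 - j./2)%N else j./2.

Lemma pivot_lt j : (j < n)%N -> (pivot j < n)%N.
Proof. by rewrite /pivot; case: odd; lia. Qed.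

Lemma pivot_ltS j : (j < n)%N -> (pivot j < n.+1)%N.
Proof. by move/pivot_lt/ltnW. Qed.

Lemma pivot_inj j k : (j < n)%N -> (k < n)%N -> pivot j = pivot k -> j = k.
Proof.
move=> lt_jn lt_kn; rewrite /pivot.
have := odd_double_half j; have := odd_double_half k.
by case: (odd j); case: (odd k); move: j./2 k./2 => a b /=; lia.
Qed.

Lemma pivot_notin_window j i : (j < i)%N -> (i < n)%N -> ~~ window j (pivot i).
Proof.
move=> lt_ji lt_in; rewrite /window /pivot.
have := odd_double_half j; have := odd_double_half i.
by case: (odd j); case: (odd i); move: j./2 i./2 => a b /=; lia.
Qed.

Lemma krylov_pivot j : (j < n)%N -> krylov j 0 (inord (pivot j)) = (-1) ^+ j./2.
Proof.
elim: j => [|j IHj] lt_jn; first by rewrite krylov0 inordK.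
have lt_j : (j < n)%N := ltnW lt_jn.
have others : \sum_(c | c != inord (pivot j))
    krylov j 0 c * Tmat c (inord (pivot j.+1)) = 0.
  apply: big1 => c ne_c; case: (boolP (window j c)) => in_c; last first.
    by rewrite krylov_window ?mul0r.
  have {}ne_c : (c : nat) != pivot j.
    by apply: contra ne_c => /eqP <-; rewrite inord_val.
  rewrite Tmat_eq0 ?mulr0 // inordK ?pivot_ltS //; move: in_c ne_c;
    rewrite /window /pivot /=; case: (boolP (odd j)) => /= odd_j; lia.
rewrite krylovS (bigD1 (inord (pivot j))) //= others addr0 IHj //.
rewrite /pivot /= uphalf_half; case: (boolP (odd j)) => /= odd_j.
  by rewrite Tmat_sub ?inordK ?exprS ?mulrN1 ?mulN1r //; lia.
by rewrite Tmat_anti ?inordK ?mulr1 //; lia.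
Qed.

Section KrylovBasis.
Hypothesis n_gt0 : (0 < n)%N.

Lemma krylov_last j : krylov j 0 ord_max = 0.
Proof.
case: j => [|j]; first by rewrite krylov0 (_ : (_ == _) = false) //=; lia.
by rewrite krylovS big1 // => c _; rewrite Tmat_lastcol mulr0.
Qed.

Definition Kmat : mx :=
  \matrix_(j, c) (if (j < n)%N then krylov j 0 c else (c == ord_max)%:R).

(* Reading the columns of Kmat in pivot order makes it lower triangular. *)
Definition pivot_ord (j : 'I_n.+1) : 'I_n.+1 :=
  if (j < n)%N then inord (pivot j) else ord_max.

Lemma pivot_ord_inj : injective pivot_ord.
Proof.
move=> j k; rewrite /pivot_ord.
case: (ltnP j n) => [lt_jn | /ord_maxP ->]; case: (ltnP k n) => [lt_kn | /ord_maxP ->] //.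
- move/(congr1 val); rewrite /= !inordK ?pivot_ltS // => e.
  exact/val_inj/pivot_inj.
- move/(congr1 val); rewrite /= inordK ?pivot_ltS // => e.
  by have := pivot_lt _ lt_jn; rewrite e ltnn.
- move/(congr1 val); rewrite /= inordK ?pivot_ltS // => e.
  by have := pivot_lt _ lt_kn; rewrite -e ltnn.
Qed.

Definition pivot_perm : 'S_n.+1 := perm pivot_ord_inj.

Lemma Kmat_pivot_trig : is_trig_mx (col_perm pivot_perm Kmat).
Proof.
apply/is_trig_mxP => j i lt_ji; rewrite mxE [Kmat _ _]mxE permE /pivot_ord.
have lt_jn : (j < n)%N by have := ltn_ord i; lia.
rewrite lt_jn; case: (ltnP i n) => [lt_in | _]; last exact: krylov_last.
by apply: krylov_window; rewrite inordK ?pivot_ltS ?pivot_notin_window.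
Qed.

(* The reordered Kmat is triangular with diagonal entries +-1. *)
Lemma Kmat_unit : Kmat \in unitmx.
Proof.
have : col_perm pivot_perm Kmat \in unitmx.
  rewrite unitmxE (det_trig Kmat_pivot_trig) unitfE; apply/prodf_neq0 => j _.
  rewrite mxE [Kmat _ _]mxE permE /pivot_ord.
  case: (ltnP j n) => [lt_jn | _]; last by rewrite eqxx oner_eq0.
  by rewrite krylov_pivot // signr_eq0.
by rewrite col_permE unitmx_mul => /andP [].
Qed.

Lemma Kmat_mulI (Y : mx) : Kmat *m Y = 0 -> Y = 0.
Proof. by move=> KY0; rewrite -(mulKmx Kmat_unit Y) KY0 mulmx0. Qed.

Lemma row_Kmat (j : 'I_n.+1) :
  row j Kmat = if (j < n)%N then krylov j else delta_mx 0 ord_max.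
Proof. by apply/rowP => c; rewrite mxE [Kmat _ _]mxE; case: ifP => // _; rewrite mxE. Qed.

Lemma mulmx_Kmat (d : 'rV[C]_n.+1) : d *m Kmat =
  d 0 ord_max *: delta_mx 0 ord_max + \sum_(i < n) d 0 (lift ord_max i) *: krylov i.
Proof.
rewrite mulmx_sum_row (bigD1_ord ord_max) //= row_Kmat ltnn; congr (_ + _).
by apply: eq_bigr => i _; rewrite row_Kmat lift_max ltn_ord.
Qed.

Lemma krylov_mulmx_comm (Z : mx) j : Z *m Tmat = Tmat *m Z ->
  krylov j *m Z = row 0 Z *m Tmat ^+ j.
Proof.
by move=> /(@commrX _ _ _ j); rewrite /GRing.comm -!mulmxE /krylov -!row_mul => ->.
Qed.

Lemma krylov_Corner j : krylov j *m Corner = 0.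
Proof.
apply/rowP => c; rewrite mxE [RHS]mxE big1 // => l _; rewrite [Corner _ _]mxE.
by case: (eqVneq l ord_max) => [-> | _]; rewrite ?krylov_last ?mul0r ?mulr0.
Qed.

(* The centralizer of Fmat meets the matrices with vanishing first row only
   in the multiples of Corner: the rows of Kmat all annihilate Z - z Corner. *)
Lemma centralizer_row0 (Z : mx) : Z *m Fmat = Fmat *m Z -> row 0 Z = 0 ->
  Z = Z ord_max ord_max *: Corner.
Proof.
move=> commZ row0Z; apply/eqP; rewrite -subr_eq0; apply/eqP/Kmat_mulI.
apply/row_matrixP => j; rewrite row_mul row0 row_Kmat; case: ifP => _.
  rewrite mulmxBr krylov_mulmx_comm ?row0Z ?mul0mx; last exact: centralizer_Tmat.
  by rewrite -scalemxAr krylov_Corner scaler0 subrr.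
rewrite -rowE; apply/rowP => c; rewrite !mxE.
case: (ltnP c n) => [lt_cn | /ord_maxP ->]; last by rewrite !eqxx mulr1 subrr.
rewrite (centralizer_lastrow _ commZ _ lt_cn) (_ : c == ord_max = false).
  by rewrite andbF mulr0 subrr.
by apply/negbTE; rewrite -val_eqE /= neq_ltn lt_cn.
Qed.

(* The basis of the Kirillov kernel: T^l corrected by a corner entry to be
   traceless, for l < n. *)
Definition kernel_basis (l : nat) : mx := Tmat ^+ l - \tr (Tmat ^+ l) *: Corner.

Definition kernel_tuple : n.-tuple mx := [tuple kernel_basis l | l < n].

Lemma kernel_tupleE (i : 'I_n) : kernel_tuple`_i = kernel_basis i.
Proof. by rewrite -tnth_nth tnth_mktuple. Qed.

Lemma kernel_comb (k : 'I_n -> C) : \sum_i k i *: kernel_basis i =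
  \sum_i k i *: Tmat ^+ i - (\sum_i k i * \tr (Tmat ^+ i)) *: Corner.
Proof.
rewrite /kernel_basis; under eq_bigr do rewrite scalerBr scalerA.
by rewrite sumrB scaler_suml.
Qed.

Lemma row0_krylov_comb (k : 'I_n -> C) :
  row 0 (\sum_i k i *: Tmat ^+ i) = \sum_i k i *: krylov i.
Proof. by rewrite rowE linear_sum; apply: eq_bigr => i _; rewrite linearZ /= -rowE. Qed.

Lemma row0_Corner : row 0 Corner = 0.
Proof.
apply/rowP => c; rewrite !mxE (_ : 0 == ord_max = false) //.
by apply/negbTE; rewrite -val_eqE /= eq_sym -lt0n.
Qed.

Lemma row0_kernel_comb (k : 'I_n -> C) :
  row 0 (\sum_i k i *: kernel_basis i) = \sum_i k i *: krylov i.
Proof.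
rewrite kernel_comb rowE linearB /= linearZ /= -!rowE row0_Corner scaler0 subr0.
exact: row0_krylov_comb.
Qed.

Lemma kernel_tuple_free : free kernel_tuple.
Proof.
apply/freeP => k comb0 i.
pose d : 'rV[C]_n.+1 := \row_j oapp k 0 (unlift ord_max j).
have dK : d *m Kmat = 0.
  rewrite mulmx_Kmat mxE unlift_none scale0r add0r.
  under eq_bigr do rewrite mxE liftK /=.
  have {}comb0 : \sum_i k i *: kernel_basis i = 0.
    by rewrite -[RHS]comb0; apply: eq_bigr => j _; rewrite kernel_tupleE.
  by rewrite -row0_kernel_comb comb0 row0.
have : d = 0 by rewrite -(mulmxK Kmat_unit d) dK mul0mx.
by move/rowP/(_ (lift ord_max i)); rewrite !mxE liftK.
Qed.

Lemma Tmat_comb_comm (k : 'I_n -> C) :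
  (\sum_i k i *: Tmat ^+ i) *m Fmat = Fmat *m \sum_i k i *: Tmat ^+ i.
Proof.
apply/comm_mx_sym/comm_mx_sum => i _; rewrite /comm_mx -scalemxAl -scalemxAr.
by have := commrX i Fmat_Tmat_comm; rewrite /GRing.comm -!mulmxE => ->.
Qed.

Lemma kernel_comb_sl (k : 'I_n -> C) : in_sl (\sum_i k i *: kernel_basis i).
Proof.
rewrite /in_sl kernel_comb mxtraceB mxtraceZ /Corner mxtrace_delta eqxx mulr1.
by rewrite mxtrace_sum; under eq_bigr do rewrite mxtraceZ; rewrite subrr.
Qed.

Lemma kernel_comb_comm (k : 'I_n -> C) :
  (\sum_i k i *: kernel_basis i) *m Fmat = Fmat *m \sum_i k i *: kernel_basis i.
Proof.
rewrite kernel_comb mulmxBl mulmxBr -scalemxAl -scalemxAr Fmat_Corner Corner_Fmat.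
by rewrite Tmat_comb_comm.
Qed.

(* Conversely every traceless matrix commuting with Fmat is such a
   combination: subtract the polynomial in Tmat with the same first row, as
   given by inverting Kmat; what remains is a multiple of Corner, and the
   multiple is fixed by the trace. *)
Lemma traceless_centralizer_comb (X : mx) : in_sl X -> X *m Fmat = Fmat *m X ->
  exists k : 'I_n -> C, X = \sum_i k i *: kernel_basis i.
Proof.
move=> slX commX; pose d := row 0 X *m invmx Kmat.
have dK : d *m Kmat = row 0 X by rewrite mulmxKV ?Kmat_unit.
have d_last : d 0 ord_max = 0.
  have := congr1 (fun r : 'rV_n.+1 => r 0 ord_max) dK.
  rewrite /= mulmx_Kmat mxE summxE big1 => [|i _]; last by rewrite mxE krylov_last mulr0.
  by rewrite !mxE !eqxx mulr1 addr0 => ->; rewrite (centralizer_lastcol _ commX).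
pose k (i : 'I_n) := d 0 (lift ord_max i); pose Z := X - \sum_i k i *: Tmat ^+ i.
have commZ : Z *m Fmat = Fmat *m Z by rewrite mulmxBl mulmxBr commX Tmat_comb_comm.
have row0Z : row 0 Z = 0.
  rewrite /Z rowE linearB /= -!rowE row0_krylov_comb -dK mulmx_Kmat d_last.
  by rewrite scale0r add0r subrr.
have X_eq : X = \sum_i k i *: Tmat ^+ i + Z ord_max ord_max *: Corner.
  by rewrite -(centralizer_row0 _ commZ row0Z) /Z addrC subrK.
have z_eq : Z ord_max ord_max = - \sum_i k i * \tr (Tmat ^+ i).
  move: slX; rewrite /in_sl {1}X_eq mxtraceD mxtraceZ /Corner mxtrace_delta eqxx mulr1.
  rewrite mxtrace_sum; under eq_bigr do rewrite mxtraceZ.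
  by move/eqP; rewrite addrC addr_eq0 => /eqP.
by exists k; rewrite kernel_comb {1}X_eq z_eq scaleNr.
Qed.

End KrylovBasis.
End Matrices.

Theorem theorem4p3 (C : numClosedFieldType) (n : nat) (hn : (1 <= n)%N) :
  exists V : {vspace 'M[C]_n.+1},
    (forall X : 'M[C]_n.+1, X \in V <-> kirillov_ker_sl (@F_fun C n) X) /\
    \dim V = n.
Proof.
have char0 : n.+1%:R != 0 :> C by rewrite pnatr_eq0.
exists <<kernel_tuple C n>>%VS; split; last first.
  by have /eqP := @kernel_tuple_free C n hn; rewrite size_tuple.
move=> X; rewrite mem_span_tupleP (kirillov_ker_trace_form _ _ _ _ char0 (@F_fun_trace C n)).
split=> [[k ->] | [slX commX]].
  under eq_bigr do rewrite kernel_tupleE.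
  exact: (conj (kernel_comb_sl _ _ k) (kernel_comb_comm _ _ k)).
have [k ->] := @traceless_centralizer_comb C n hn X slX commX.
by exists k; apply: eq_bigr => i _; rewrite kernel_tupleE.
Qed.
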